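(* Let $A$ and $B$ be Latin squares of order $n$. Then $A$ and $B$ are weak orthogonal if and only if they are left orthogonal.
   Context: $\{\ket k\}_{k=0}^{n-1}$ is the computational basis of $\mathbb C^n$. A quantum Latin square (QLS) of order $n$ is an $n\times n$ array of vectors of $\mathbb C^n$ in which every row and every column is an orthonormal basis; the entry in column $i$, row $j$ of $\mathcal Q$ is $\ket{Q_{ij}}$. A Latin square is a QLS all of whose entries are computational basis states; identify it with the array of labels $L_{ij}\in\{0,\dots,n-1\}$ where $\ket{L_{ij}}$ is the entry. Two QLSs $\mathcal P,\mathcal Q$ are weak orthogonal if for all $i,j$ there is a unique $t$ with $\sum_{k=0}^{n-1}\ket k\langle Q_{ki}|P_{kj}\rangle=\ket t$. Two Latin squares $A,B$ are orthogonal if the pairs $(A_{ij},B_{ij})$ over all positions $(i,j)$ give all $n^2$ pairs of labels. The left conjugate of a Latin square $L$ is the Latin square $L'$ defined by $L'_{ik}=j$ if and only if $L_{ij}=k$ (left division in the quasigroup with Cayley table $L$). Two Latin squares are left orthogonal if their left conjugates are orthogonal. *)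

From HB Require Import structures.
From mathcomp Require Import all_boot all_order all_algebra all_field.
Set Implicit Arguments. Unset Strict Implicit. Unset Printing Implicit Defensive.
Import GRing.Theory Num.Theory.
Local Open Scope ring_scope.

Definition ket (n : nat) (k : 'I_n) : 'cV[algC]_n := delta_mx k 0.

Definition braket (n : nat) (u v : 'cV[algC]_n) : algC :=
  \sum_(k < n) (u k 0)^* * v k 0.

(* An n x n array of vectors of C^n; Q i j is the entry in column i, row j. *)
Definition array (n : nat) := 'I_n -> 'I_n -> 'cV[algC]_n.

Definition weak_orthogonal (n : nat) (P Q : array n) : Prop :=
  forall i j : 'I_n, exists! t : 'I_n,
    \sum_(k < n) braket (Q k i) (P k j) *: ket k = ket t.

(* Latin squares as label arrays L i j (column i, row j): every row and every
   column contains each label exactly once. *)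
Definition latin_square (n : nat) (L : 'I_n -> 'I_n -> 'I_n) : Prop :=
  (forall i, injective (L i)) /\ (forall j, injective (fun i => L i j)).

Definition qls_of (n : nat) (L : 'I_n -> 'I_n -> 'I_n) : array n :=
  fun i j => ket (L i j).

Definition orthogonal (n : nat) (A B : 'I_n -> 'I_n -> 'I_n) : Prop :=
  forall a b : 'I_n, exists i j : 'I_n, A i j = a /\ B i j = b.

(* Left conjugate: L' i k = j iff L i j = k (well defined for Latin squares). *)
Definition left_conj (n : nat) (L : 'I_n -> 'I_n -> 'I_n) : 'I_n -> 'I_n -> 'I_n :=
  fun i k => odflt k [pick j | L i j == k].

Definition left_orthogonal (n : nat) (A B : 'I_n -> 'I_n -> 'I_n) : Prop :=
  orthogonal (left_conj A) (left_conj B).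

From mathcomp Require Import all_boot all_order all_algebra all_field.
From Corelib Require Import Setoid.
Set Implicit Arguments. Unset Strict Implicit. Unset Printing Implicit Defensive.
Import GRing.Theory Num.Theory.

(* For basis-state squares the vector in the definition of weak orthogonality
   has k-th coordinate [B k i = A k j], so it is a basis state exactly when a
   unique row t has B t i = A t j.  Unfolded, left orthogonality says that any
   two columns a of A and b of B share a label in at least one row i.
   Uniqueness comes for free: sending (i, a) to (a, b), where b is the column
   in which row i of B holds A i a, maps the n^2 pairs onto themselves, hence
   injectively.  Only row injectivity is ever used. *)

Lemma surj_injective (T : finType) (f : T -> T) :
  (forall y, exists x, f x = y) -> injective f.
Proof.
move=> f_surj x y; apply: (image_injP _ _) => //.
rewrite eqn_leq (leq_trans (card_size _)) ?size_image //.
apply: subset_leq_card; apply/subsetP => z _.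
by have [w <-] := f_surj z; rewrite image_f ?in_setT.
Qed.

Lemma exists_unique_pred1P (T : eqType) (P : pred T) (Q : T -> Prop) :
  (forall t, reflect (Q t) (P t)) ->
  (exists! t, P =1 pred1 t) <-> (exists! t, Q t).
Proof.
move=> PQ; split=> [[t [Pt _]] | [t [Qt Quniq]]]; exists t.
  by split=> [|u /PQ]; [apply/PQ; rewrite Pt /= | rewrite Pt => /eqP].
split=> [u|u Pu]; last by apply/Quniq/PQ; rewrite Pu /=.
by apply/PQ/eqP=> [/Quniq/esym | ->].
Qed.

Section LeftConjugate.

Variables (n : nat) (L : 'I_n -> 'I_n -> 'I_n).
Hypothesis L_inj : forall i, injective (L i).

Lemma left_conjK i : cancel (L i) (left_conj L i).
Proof.
move=> j; rewrite /left_conj; case: pickP => [j' /eqP/L_inj //|].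
by move/(_ j); rewrite eqxx.
Qed.

Lemma left_conjKV i : cancel (left_conj L i) (L i).
Proof. by have [g _ Lg] := injF_bij (@L_inj i); move=> k; rewrite -[k]Lg left_conjK. Qed.

End LeftConjugate.

Lemma left_orthogonalE (n : nat) (A B : 'I_n -> 'I_n -> 'I_n) :
  (forall i, injective (A i)) -> (forall i, injective (B i)) ->
  left_orthogonal A B <-> (forall a b, exists i, A i a = B i b).
Proof.
move=> Ainj Binj; split=> [LO a b | AB a b].
  by have [i [k [<- <-]]] := LO a b; exists i; rewrite !left_conjKV.
by have [i Ei] := AB a b; exists i, (A i a); rewrite {2}Ei !left_conjK.
Qed.

Lemma common_entry_unique (n : nat) (A B : 'I_n -> 'I_n -> 'I_n) :
  (forall i, injective (B i)) -> (forall a b, exists i, A i a = B i b) ->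
  forall a b, exists! i, A i a = B i b.
Proof.
move=> Binj AB a b.
pose f (p : 'I_n * 'I_n) := (p.2, left_conj B p.1 (A p.1 p.2)).
have f_inj : injective f.
  apply: surj_injective => -[a' b']; have [i Ei] := AB a' b'.
  by exists (i, a'); rewrite /f /= Ei left_conjK.
have [i Ei] := AB a b; exists i; split=> // i' Ei'.
have : f (i, a) = f (i', a) by rewrite /f /= Ei Ei' !left_conjK.
by move/f_inj => [].
Qed.

Local Open Scope ring_scope.

Lemma braket_ket (n : nat) (a b : 'I_n) : braket (ket a) (ket b) = (a == b)%:R.
Proof.
rewrite /braket (bigD1 a) //= big1 ?addr0 => [|k /negbTE nka].
  by rewrite !mxE !eqxx eq_sym andbT; case: (b == a); rewrite ?conjC1 ?mul1r.
by rewrite !mxE nka conjC0 mul0r.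
Qed.

Lemma sum_scale_ket (n : nat) (c : 'I_n -> algC) :
  \sum_(k < n) c k *: ket k = \col_k c k.
Proof.
apply/matrixP=> m z; rewrite (ord1 z) summxE (bigD1 m) //= big1 ?addr0 => [|k].
  by rewrite !mxE !eqxx mulr1.
by rewrite !mxE eq_sym => /negbTE->; rewrite mulr0.
Qed.

Lemma sum_indicator_ket (n : nat) (P : pred 'I_n) (t : 'I_n) :
  \sum_(k < n) (P k)%:R *: ket k = ket t <-> P =1 pred1 t.
Proof.
rewrite sum_scale_ket; split=> [/matrixP E k | E].
  have := E k 0; rewrite !mxE eqxx andbT /=.
  by case: (P k); case: (k == t) => // /eqP; rewrite ?oner_eq0 // eq_sym oner_eq0.
by apply/matrixP=> k z; rewrite (ord1 z) !mxE E eqxx andbT.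
Qed.

Lemma weak_orthogonal_qlsE (n : nat) (A B : 'I_n -> 'I_n -> 'I_n) :
  weak_orthogonal (qls_of A) (qls_of B) <-> (forall i j, exists! t, B t i = A t j).
Proof.
have cellE i j t : \sum_(k < n) braket (qls_of B k i) (qls_of A k j) *: ket k = ket t
    <-> (fun k => B k i == A k j) =1 pred1 t.
  by rewrite -sum_indicator_ket; under eq_bigr do rewrite braket_ket.
have cellP i j t : reflect (B t i = A t j) (B t i == A t j) := eqP.
split=> WO i j.
  apply/(exists_unique_pred1P (cellP i j)).
  by have [t [/cellE Et Euniq]] := WO i j; exists t; split=> // u /cellE/Euniq.
have [t [Et Euniq]] := (exists_unique_pred1P (cellP i j)).2 (WO i j).
by exists t; split=> [|u /cellE/Euniq //]; apply/cellE.
Qed.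

Theorem lemma21 (n : nat) (A B : 'I_n -> 'I_n -> 'I_n) :
  latin_square A -> latin_square B ->
  (weak_orthogonal (qls_of A) (qls_of B) <-> left_orthogonal A B).
Proof.
move=> [Ainj _] [Binj _].
rewrite weak_orthogonal_qlsE left_orthogonalE //.
split=> [WO a b | AB i j].
  by have [t [Et _]] := WO b a; exists t.
have [t [Et Euniq]] := common_entry_unique Binj AB j i.
by exists t; split=> // u /esym/Euniq.
Qed.
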